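(* Let $\Delta\subset\Delta'$ be (not necessarily lattice) $d$-simplices in $\mathbb{R}^d$ having the origin $O$ as a common vertex and spanning the same cone at $O$. Then for every real $\epsilon$ with $0<\epsilon<1$ and every real $c\ge\sqrt d/\epsilon$ one has $$(c-\epsilon c)\Delta'\subset \mathrm{UC}_\Delta(c\Delta').$$
   Context: For affinely independent $v_0,\dots,v_e$, the affine lattice they define is $v_0+\sum_{i=1}^e\mathbb{Z}(v_i-v_0)$; for a simplex $\Delta=\mathrm{conv}(w_0,\dots,w_e)$ set $\mathcal{L}_\Delta=w_0+\sum_{i=1}^e\mathbb{Z}(w_i-w_0)$ (independent of the ordering of vertices). For an affine lattice $\mathcal L$, a simplex $\Sigma$ is $\mathcal L$-unimodular if $\mathcal L_\Sigma=\mathcal L$. For a polytope $P$, $\mathrm{UC}_{\mathcal L}(P)$ is the union of all $\mathcal L$-unimodular simplices contained in $P$, and $\mathrm{UC}_\Delta(P)=\mathrm{UC}_{\mathcal L_\Delta}(P)$. $cP$ denotes dilatation by $c$ with center $O$. *)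

From HB Require Import structures.
From mathcomp Require Import all_boot all_order all_algebra.
From mathcomp Require Import boolp classical_sets reals.
Set Implicit Arguments. Unset Strict Implicit. Unset Printing Implicit Defensive.
Import Order.TTheory GRing.Theory Num.Theory.
Local Open Scope ring_scope.
Local Open Scope classical_set_scope.

(* Points of R^d are row vectors 'rV[R]_d.  A simplex of dimension e is
   given by a family of e+1 vertices v : 'I_e.+1 -> 'rV[R]_d. *)

Definition aff_indep (R : realType) (d e : nat) (v : 'I_e.+1 -> 'rV[R]_d) : Prop :=
  forall lam : 'I_e.+1 -> R,
    \sum_i lam i = 0 -> \sum_i lam i *: v i = 0 -> forall i, lam i = 0.

Definition conv (R : realType) (d e : nat) (v : 'I_e.+1 -> 'rV[R]_d) : set 'rV[R]_d :=
  [set x | exists lam : 'I_e.+1 -> R,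
     (forall i, 0 <= lam i) /\ \sum_i lam i = 1 /\ x = \sum_i lam i *: v i].

Definition aff_lattice (R : realType) (d e : nat) (v : 'I_e.+1 -> 'rV[R]_d)
  : set 'rV[R]_d :=
  [set x | exists z : 'I_e.+1 -> int,
     x = v ord0 + \sum_i (z i)%:~R *: (v i - v ord0)].

Definition unimodular (R : realType) (d e : nat) (L : set 'rV[R]_d)
  (v : 'I_e.+1 -> 'rV[R]_d) : Prop :=
  aff_indep v /\ aff_lattice v = L.

Definition UC (R : realType) (d : nat) (L P : set 'rV[R]_d) : set 'rV[R]_d :=
  [set x | exists (e : nat) (v : 'I_e.+1 -> 'rV[R]_d),
     unimodular L v /\ conv v `<=` P /\ conv v x].

Definition dil (R : realType) (d : nat) (c : R) (P : set 'rV[R]_d) : set 'rV[R]_d :=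
  [set c *: x | x in P].

Definition cone0 (R : realType) (d : nat) (P : set 'rV[R]_d) : set 'rV[R]_d :=
  [set x | exists t : R, exists2 y, P y & 0 <= t /\ x = t *: y].

From HB Require Import structures.
From mathcomp Require Import all_boot all_order all_algebra.
From mathcomp Require Import boolp classical_sets reals.
From mathcomp Require Import ring lra zify.
Import Order.TTheory GRing.Theory Num.Theory.

Set Implicit Arguments.
Unset Strict Implicit.
Unset Printing Implicit Defensive.

Local Open Scope ring_scope.

(* Since the two simplices span the same cone at O, the point x = (c - eps c) y,
   y in Delta', is a nonnegative combination sum_i mu_i w_i of the vertices of
   Delta.  Let h be the linear form equal to 1 on the facet of Delta' opposite
   to O, so that a point of the cone lies in c Delta' iff its height is at most
   c, and h(x) <= c - eps c.  Order the nonzero vertices of Delta by decreasing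
   height.  In that basis the partial sums of the coordinates of x lie in a
   cell of the Kuhn (Freudenthal) triangulation of R^d by unimodular simplices;
   taking first differences turns this cell into an L_Delta-unimodular simplex
   containing x whose vertices have nonnegative integer coordinates.  By Abel
   summation against the nonincreasing heights, every vertex has height at most
   h(x) + 1 <= c, because eps c >= sqrt d >= 1 (the case d = 0 is trivial). *)

Lemma telescope_sumr_gt (V : pzRingType) (f : nat -> V) p m : (p <= m)%N ->
  \sum_(k < m.+1) (f k - f k.+1) * (p < k)%:R = f p.+1 - f m.+1.
Proof.
elim: m => [|m IH].
  by rewrite leqn0 => /eqP ->; rewrite big_ord1 mulr0 subrr.
rewrite leq_eqVlt => /orP[/eqP ->|pm].
  by rewrite subrr big1 // => k _; rewrite ltnNge -ltnS ltn_ord mulr0.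
by rewrite big_ord_recr /= IH // pm mulr1 addrA subrK.
Qed.

Section KuhnTriangulation.

Variables (R : archiRealFieldType) (n : nat) (mu : nat -> R).

Definition psum j : R := \sum_(i < j.+1) mu i.

Definition fpart j : R := psum j - (Num.floor (psum j))%:~R.

(* Ties are broken in favour of the larger index: when [mu j.+1 = 0] the
   indices [j] and [j.+1] have equal fractional parts, and [j.+1] must come
   first for [kuhn_step] to stay nonnegative. *)
Definition frac_before i j : bool :=
  (fpart j < fpart i) || ((fpart i == fpart j) && (j < i)%N).

Definition frac_rank j : nat := #|[set i : 'I_n | frac_before i j]|.

Definition frac_unrank m : nat :=
  if [pick j : 'I_n | frac_rank j == m] is Some j then val j else 0.

Lemma fpart_ge0 j : 0 <= fpart j.
Proof. by rewrite subr_ge0 floor_le. Qed.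

Lemma fpart_lt1 j : fpart j < 1.
Proof. by have := floorD1_gt (psum j); rewrite /fpart intrD; lra. Qed.

Lemma frac_before_irr j : ~~ frac_before j j.
Proof. by rewrite /frac_before ltxx ltnn andbF. Qed.

Lemma frac_before_trans i j k :
  frac_before i j -> frac_before j k -> frac_before i k.
Proof.
rewrite /frac_before => /orP[h1|/andP[/eqP e1 h1]] /orP[h2|/andP[/eqP e2 h2]].
- by rewrite (lt_trans h2 h1).
- by rewrite -e2 h1.
- by rewrite e1 h2.
- by rewrite e1 e2 eqxx (ltn_trans h2 h1) orbT.
Qed.

Lemma frac_before_total i j :
  i != j -> frac_before i j || frac_before j i.
Proof.
move=> ij; rewrite /frac_before.
have [h|h|h] := ltgtP (fpart i) (fpart j); rewrite ?orbT //.
by case: (ltngtP i j) => // e; rewrite e eqxx in ij.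
Qed.

Lemma fpart_before_le i j : frac_before i j -> fpart j <= fpart i.
Proof. by move=> /orP[/ltW //|/andP[/eqP -> _]]. Qed.

Lemma frac_rank_lt j : (j < n)%N -> (frac_rank j < n)%N.
Proof.
move=> jn; rewrite -[X in (_ < X)%N]card_ord -cardsT.
apply/proper_card/properP; split; first exact: finset.subsetT.
by exists (Ordinal jn); rewrite ?finset.in_setT // inE frac_before_irr.
Qed.

Lemma frac_before_rank_lt i j : (i < n)%N ->
  frac_before i j -> (frac_rank i < frac_rank j)%N.
Proof.
move=> io bij; apply/proper_card/properP; split.
  by apply/fintype.subsetP => k; rewrite !inE => /frac_before_trans; apply.
by exists (Ordinal io); rewrite !inE //= frac_before_irr.
Qed.

Lemma frac_rank_inj i j : (i < n)%N -> (j < n)%N ->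
  frac_rank i = frac_rank j -> i = j.
Proof.
move=> io jo e; apply/eqP; apply: contraT => /frac_before_total /orP[] h.
  by have := frac_before_rank_lt io h; rewrite e ltnn.
by have := frac_before_rank_lt jo h; rewrite e ltnn.
Qed.

Lemma frac_rank_lt_before i j : (i < n)%N -> (j < n)%N ->
  (frac_rank i < frac_rank j)%N -> frac_before i j.
Proof.
move=> io jo h.
have ij : i != j by apply: contraTneq h => ->; rewrite ltnn.
case/orP: (frac_before_total ij) => // /(frac_before_rank_lt jo).
by rewrite ltnNge (ltnW h).
Qed.

Lemma frac_unrank_spec m : (m < n)%N ->
  (frac_unrank m < n)%N /\ frac_rank (frac_unrank m) = m.
Proof.
move=> mn.
pose f (j : 'I_n) : 'I_n := Ordinal (frac_rank_lt (ltn_ord j)).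
have finj : injective f by move=> a b /(congr1 val) /frac_rank_inj e; apply/val_inj/e.
have [g _ gf] := injF_bij finj.
rewrite /frac_unrank; case: pickP => [j /eqP <-|/(_ (g (Ordinal mn)))].
  by split; [exact: ltn_ord|].
by have /(congr1 val) /= -> := gf (Ordinal mn); rewrite eqxx.
Qed.

Lemma frac_rankK j : (j < n)%N -> frac_unrank (frac_rank j) = j.
Proof.
move=> jn; have [lt_n e] := frac_unrank_spec (frac_rank_lt jn).
exact: frac_rank_inj e.
Qed.

(* [kuhn_vertex k j.+1] is the [j]-th coordinate of the [k]-th vertex of the
   Kuhn simplex containing the point [(psum j)_j]; the shift puts a [0] at
   index [0], so that [kuhn_step k] is the sequence of its first differences. *)
Definition kuhn_vertex k j : int :=
  if j is j'.+1 then Num.floor (psum j') + ((frac_rank j' < k)%N : nat)%:Z else 0.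

Definition kuhn_step k j : int := kuhn_vertex k j.+1 - kuhn_vertex k j.

(* The barycentric coordinates of [(psum j)_j] in its Kuhn simplex are the gaps
   between consecutive fractional parts, listed in decreasing order between
   [1] and [0]. *)
Definition kth_fpart m : R :=
  if m is m'.+1 then (if (m' < n)%N then fpart (frac_unrank m') else 0) else 1.

Definition kuhn_weight k : R := kth_fpart k - kth_fpart k.+1.

Lemma kuhn_weight_ge0 k : (k <= n)%N -> 0 <= kuhn_weight k.
Proof.
rewrite /kuhn_weight /kth_fpart subr_ge0; case: k => [|k] kn.
  by case: (0 < n)%N; rewrite // ltW ?fpart_lt1.
rewrite kn; case: ifP => [h|_]; last exact: fpart_ge0.
have [s1 r1] := frac_unrank_spec kn; have [s2 r2] := frac_unrank_spec h.
by apply/fpart_before_le/(frac_rank_lt_before s1 s2); rewrite r1 r2.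
Qed.

Lemma kuhn_weight_sum : \sum_(k < n.+1) kuhn_weight k = 1.
Proof.
have := telescope_sumr kth_fpart (leq0n n.+1); rewrite big_mkord => e.
by rewrite -[LHS]opprK -sumrN (eq_bigr _ (fun k _ => opprB _ _)) e /= ltnn opprB subr0.
Qed.

Lemma kuhn_weight_vertex j : (j < n)%N ->
  \sum_(k < n.+1) kuhn_weight k * (kuhn_vertex k j.+1)%:~R = psum j.
Proof.
move=> jn; transitivity ((Num.floor (psum j))%:~R * \sum_(k < n.+1) kuhn_weight k +
   \sum_(k < n.+1) (kth_fpart k - kth_fpart k.+1) * (frac_rank j < k)%:R).
  rewrite mulr_sumr -big_split; apply: eq_bigr => k _.
  by rewrite [kuhn_vertex _ _]/= intrD mulrDr [_ * (Num.floor _)%:~R]mulrC.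
rewrite kuhn_weight_sum telescope_sumr_gt ?(ltnW (frac_rank_lt jn)) //=.
by rewrite frac_rank_lt // frac_rankK // ltnn subr0 mulr1 /fpart; ring.
Qed.

Lemma kuhn_weight_step j : (j < n)%N ->
  \sum_(k < n.+1) kuhn_weight k * (kuhn_step k j)%:~R = mu j.
Proof.
move=> jn; under eq_bigr do rewrite intrB mulrBr.
rewrite sumrB kuhn_weight_vertex //; case: j jn => [|j] jn.
  by rewrite big1 ?subr0 /psum ?big_ord1 // => k _; rewrite mulr0.
by rewrite kuhn_weight_vertex ?(ltnW jn) // /psum big_ord_recr /=; ring.
Qed.

Lemma kuhn_step_ge0 k j : (forall i, (i < n)%N -> 0 <= mu i) -> (j < n)%N ->
  0 <= kuhn_step k j.
Proof.
move=> mu_ge0 jn; rewrite /kuhn_step; case: j jn => [|j] jn /=.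
  by rewrite subr0 addr_ge0 // floor_ge0 /psum big_ord1 mu_ge0.
have le_psum : psum j <= psum j.+1.
  by rewrite /psum [X in _ <= X]big_ord_recr lerDl mu_ge0.
have le_floor_psum := le_floor le_psum.
have [lt_floor|] := boolP (Num.floor (psum j) < Num.floor (psum j.+1)).
  by case: (frac_rank j < k)%N; case: (frac_rank j.+1 < k)%N => /=; lia.
rewrite -leNgt => ge_floor.
have eq_floor : Num.floor (psum j.+1) = Num.floor (psum j).
  by apply/eqP; rewrite eq_le ge_floor.
have /(frac_before_rank_lt jn) lt_rank : frac_before j.+1 j.
  have : fpart j <= fpart j.+1 by rewrite /fpart eq_floor lerB.
  by rewrite /frac_before le_eqVlt => /orP[/eqP ->|->]; rewrite ?eqxx ?ltnSn ?orbT.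
rewrite eq_floor; case: (ltnP (frac_rank j) k) => [lt_k|_]; last by lia.
by rewrite (ltn_trans lt_rank lt_k) subrr.
Qed.

Lemma kuhn_vertex_le k j : (kuhn_vertex k j.+1)%:~R <= psum j + 1.
Proof.
have : (((frac_rank j < k)%N : nat)%:Z)%:~R <= 1 :> R by case: (frac_rank j < k)%N.
by rewrite /= intrD; have := floor_le (psum j); lra.
Qed.

(* Abel summation: the defects [D j] vanish at [0] and are at most [1], while
   the weights [a] are nonincreasing in [[0, 1]]. *)
Lemma kuhn_step_weighted_le (a : nat -> R) k :
  (forall j, (j < n)%N -> 0 <= a j <= 1) ->
  (forall j, (j.+1 < n)%N -> a j.+1 <= a j) ->
  \sum_(j < n) a j * (kuhn_step k j)%:~R <= \sum_(j < n) a j * mu j + 1.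
Proof.
move=> a01 a_dec.
pose D j := (kuhn_vertex k j)%:~R - \sum_(i < j) mu i.
have D_le1 j : D j.+1 <= 1 by rewrite /D -/(psum j); have := kuhn_vertex_le k j; lra.
pose E m := \sum_(j < m) a j * (D j.+1 - D j).
have -> : \sum_(j < n) a j * (kuhn_step k j)%:~R = \sum_(j < n) a j * mu j + E n.
  rewrite -big_split; apply: eq_bigr => j _.
  by rewrite /D /kuhn_step intrB big_ord_recr /=; ring.
have abel m : (m < n)%N -> E m.+1 <= a 0%N - a m + a m * D m.+1.
  elim: m => [|m IH] mn.
    by rewrite /E big_ord1 /D big_ord0 /=; lra.
  have IH' := IH (ltnW mn); rewrite /E big_ord_recr /= -/(E m.+1).
  by have := a_dec m mn; have := D_le1 m; case/andP: (a01 m.+1 mn); nra.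
case: n a01 a_dec abel => [|n'] a01 a_dec abel.
  by rewrite /E !big_ord0; lra.
have := abel n' (ltnSn n'); have := D_le1 n'.
by have := a01 n' (ltnSn n'); have := a01 0%N (ltn0Sn n'); nra.
Qed.

Lemma kuhn_step_indep (b : 'I_n.+1 -> R) :
  \sum_k b k = 0 ->
  (forall j, (j < n)%N -> \sum_k b k * (kuhn_step k j)%:~R = 0) ->
  forall k, b k = 0.
Proof.
move=> b_sum0 b_step0.
have b_vertex0 j : (j <= n)%N -> \sum_k b k * (kuhn_vertex k j)%:~R = 0.
  elim: j => [|j IH] jn; first by rewrite big1 // => k _; rewrite mulr0.
  have := b_step0 j jn; under eq_bigr do rewrite intrB mulrBr.
  by rewrite sumrB IH ?(ltnW jn) // subr0.
pose U m := \sum_k b k * (m <= k)%:R.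
have U0 m : (m <= n.+1)%N -> U m = 0.
  case: m => [|m] mn; first by rewrite -[RHS]b_sum0; apply: eq_bigr => k _; rewrite mulr1.
  move: mn; rewrite ltnS leq_eqVlt => /orP[/eqP ->|lt_mn].
    by rewrite /U big1 // => k _; rewrite ltnNge -ltnS ltn_ord mulr0.
  have [lt_n rank_m] := frac_unrank_spec lt_mn.
  pose fl := (Num.floor (psum (frac_unrank m)))%:~R : R.
  have := b_vertex0 _ lt_n; rewrite (eq_bigr (fun k => fl * b k + b k * (m < k)%:R)).
    by rewrite big_split /= -mulr_sumr b_sum0 mulr0 add0r => h; exact: h.
  by move=> k _; rewrite /= intrD rank_m mulrDr mulrC.
move=> k; transitivity (U k - U k.+1); last by rewrite !U0 ?subr0 // ltnW.
rewrite /U -sumrB (bigD1 k) //= leqnn ltnn mulr1 mulr0 subr0 big1 ?addr0 // => i ik.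
by rewrite -mulrBr leq_eqVlt -[(k : nat) == i]/(k == i) eq_sym (negbTE ik) subrr mulr0.
Qed.

(* The point with coordinates the partial sums of [M] is reached from
   [kuhn_vertex 0] along the edge vectors [kuhn_vertex k - kuhn_vertex 0],
   which are the indicators of the first [k] indices in rank order; hence its
   coefficients [F k - F k.+1] telescope. *)
Lemma kuhn_step_lattice (M : nat -> int) :
  exists z : 'I_n.+1 -> int, forall j, (j < n)%N ->
    M j = kuhn_step 0 j + \sum_k z k * (kuhn_step k j - kuhn_step 0 j).
Proof.
pose T j := \sum_(i < j.+1) M i - Num.floor (psum j).
pose F m := if m is m'.+1 then (if (m' < n)%N then T (frac_unrank m') else 0) else 0.
exists (fun k => F k - F k.+1) => j jn.
pose W j := \sum_(k < n.+1) (F k - F k.+1) * (kuhn_vertex k j - kuhn_vertex 0 j).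
have W0 : W 0%N = 0 by apply: big1 => k _; rewrite subrr mulr0.
have WS i : (i < n)%N -> W i.+1 = T i.
  move=> io; have edge k : kuhn_vertex k i.+1 - kuhn_vertex 0 i.+1 = (frac_rank i < k)%:R.
    by rewrite /= addr0 addrAC subrr add0r; case: (_ < _)%N.
  rewrite /W; under eq_bigr do rewrite edge.
  rewrite telescope_sumr_gt ?(ltnW (frac_rank_lt io)) //.
  by rewrite /F frac_rank_lt // ltnn frac_rankK // subr0.
have -> : \sum_(k < n.+1) (F k - F k.+1) * (kuhn_step k j - kuhn_step 0 j) = W j.+1 - W j.
  by rewrite /W -sumrB; apply: eq_bigr => k _; rewrite /kuhn_step; ring.
rewrite WS // /T big_ord_recr /kuhn_step /= addr0.
case: j jn => [|j] jn; first by rewrite W0 big_ord0 /=; ring.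
by rewrite WS ?(ltnW jn) // /T /= addr0; ring.
Qed.

End KuhnTriangulation.

Local Open Scope classical_set_scope.

Section SimplexCoordinates.

Variables (R : realType) (m : nat).
Implicit Types (e : nat) (c : R).

Lemma scaler_sum_exchange (I J : finType) (b : I -> R) (N : I -> J -> R)
    (W : J -> 'rV[R]_m) :
  \sum_i b i *: \sum_j N i j *: W j = \sum_j (\sum_i b i * N i j) *: W j.
Proof.
under eq_bigr do rewrite scaler_sumr.
rewrite exchange_big; apply: eq_bigr => j _; rewrite scaler_suml.
by apply: eq_bigr => i _; rewrite scalerA.
Qed.

Lemma conv_vertex e (v : 'I_e.+1 -> 'rV[R]_m) i : conv v (v i).
Proof.
exists (fun k => (k == i)%:R); split; first by move=> k; rewrite ler0n.
split; first by rewrite (bigD1 i) //= eqxx big1 ?addr0 // => k /negbTE ->.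
by rewrite (bigD1 i) //= eqxx scale1r big1 ?addr0 // => k /negbTE ->; rewrite scale0r.
Qed.

Lemma cone0_conv_comb e (v : 'I_e.+1 -> 'rV[R]_m) x :
  cone0 (conv v) x -> exists2 mu : 'I_e.+1 -> R,
    (forall i, 0 <= mu i) & x = \sum_i mu i *: v i.
Proof.
case=> t [y [lam [lam_ge0 [_ ->]]] [t_ge0 ->]].
exists (fun i => t * lam i); first by move=> i; apply: mulr_ge0.
by rewrite scaler_sumr; apply: eq_bigr => i _; rewrite scalerA.
Qed.

Lemma aff_indep_coord_sum e (v : 'I_e.+1 -> 'rV[R]_m) j0 (al be : 'I_e.+1 -> R) :
  aff_indep v -> v j0 = 0 -> \sum_j al j *: v j = \sum_j be j *: v j ->
  \sum_(j | j != j0) al j = \sum_(j | j != j0) be j.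
Proof.
move=> v_indep vj0 eq_comb.
pose S := \sum_(j | j != j0) (al j - be j).
pose lb j := if j == j0 then - S else al j - be j.
have lb_sum : \sum_j lb j = 0.
  rewrite (bigD1 j0) //= {1}/lb eqxx (eq_bigr (fun j => al j - be j)) ?addNr //.
  by move=> j /negbTE; rewrite /lb => ->.
have lb_comb : \sum_j lb j *: v j = 0.
  rewrite (eq_bigr (fun j => al j *: v j - be j *: v j)) ?sumrB ?eq_comb ?subrr //.
  by move=> j _; rewrite /lb -scalerBl; case: eqP => [->|//]; rewrite vj0 !scaler0.
have /eqP := v_indep lb lb_sum lb_comb j0.
by rewrite /lb eqxx oppr_eq0 /S sumrB subr_eq0 => /eqP.
Qed.

Lemma dil_conv_comb e (v : 'I_e.+1 -> 'rV[R]_m) j0 c (be : 'I_e.+1 -> R) :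
  v j0 = 0 -> 0 < c -> (forall j, 0 <= be j) -> \sum_(j | j != j0) be j <= c ->
  dil c (conv v) (\sum_j be j *: v j).
Proof.
move=> vj0 c_gt0 be_ge0 be_le.
pose ga j := if j == j0 then 1 - (\sum_(l | l != j0) be l) / c else be j / c.
exists (\sum_j ga j *: v j).
  exists ga; split.
    move=> j; rewrite /ga; case: eqP => _; last exact: divr_ge0 (ltW c_gt0).
    by rewrite subr_ge0 ler_pdivrMr // mul1r.
  split => //; rewrite (bigD1 j0) //= {1}/ga eqxx.
  rewrite [X in _ + X](eq_bigr (fun j => be j / c)) -?mulr_suml ?subrK //.
  by move=> j /negbTE; rewrite /ga => ->.
rewrite scaler_sumr; apply: eq_bigr => j _; rewrite scalerA /ga.
case: eqP => [->|_]; first by rewrite vj0 !scaler0.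
by rewrite mulrC -mulrA mulVf ?mulr1 ?gt_eqF.
Qed.

End SimplexCoordinates.

Definition int_span (R : realType) m (W : nat -> 'rV[R]_m) n : set 'rV[R]_m :=
  [set y | exists M : nat -> int, y = \sum_(j < n) (M j)%:~R *: W j].

Lemma aff_lattice_combE (R : realType) m e (v : 'I_e.+1 -> 'rV[R]_m) :
  aff_lattice v =
  [set x | exists2 z : 'I_e.+1 -> int, \sum_i z i = 1 & x = \sum_i (z i)%:~R *: v i].
Proof.
have comb z : v ord0 + \sum_i (z i)%:~R *: (v i - v ord0) =
    \sum_i (z i)%:~R *: v i + (1 - \sum_i z i)%:~R *: v ord0.
  under eq_bigr do rewrite scalerBr.
  by rewrite sumrB -scaler_suml -rmorph_sum intrB scalerBl scale1r addrCA.
apply/seteqP; split=> x; last first.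
  by case=> z z_sum ->; exists z; rewrite comb z_sum subrr scale0r addr0.
case=> z ->; pose t := 1 - \sum_i z i.
pose dt (i : 'I_e.+1) := if i == ord0 then t else 0.
have sum_dt (V : zmodType) (F : 'I_e.+1 -> int -> V) :
    (forall i, F i 0 = 0) -> \sum_i F i (dt i) = F ord0 t.
  by move=> F0; rewrite (bigD1 ord0) // /dt eqxx big1 /= ?addr0 // => i /negbTE ->.
exists (fun i => z i + dt i).
  by rewrite big_split /= (sum_dt _ (fun _ k => k)) // /t addrC subrK.
under [RHS]eq_bigr do rewrite intrD scalerDl.
rewrite big_split /= (sum_dt _ (fun i k => k%:~R *: v i)) => [|i]; last exact: scale0r.
by rewrite comb.
Qed.

Section IntegerCombinations.

Variables (R : realType) (m n : nat) (W : nat -> 'rV[R]_m) (N : nat -> nat -> int).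

Definition int_comb (k : 'I_n.+1) : 'rV[R]_m := \sum_(j < n) (N k j)%:~R *: W j.

Lemma int_comb_scale_sum (b : 'I_n.+1 -> R) :
  \sum_k b k *: int_comb k = \sum_(j < n) (\sum_k b k * (N k j)%:~R) *: W j.
Proof. exact: (scaler_sum_exchange b (fun k (j : 'I_n) => (N k j)%:~R)). Qed.

Lemma aff_indep_int_comb :
  (forall cc : nat -> R,
     \sum_(j < n) cc j *: W j = 0 -> forall j, (j < n)%N -> cc j = 0) ->
  (forall b : 'I_n.+1 -> R, \sum_k b k = 0 ->
     (forall j, (j < n)%N -> \sum_k b k * (N k j)%:~R = 0) -> forall k, b k = 0) ->
  aff_indep int_comb.
Proof.
move=> W_indep N_indep b b_sum b_comb; apply: N_indep => // j.
by apply: (W_indep (fun j => \sum_k b k * (N k j)%:~R)); rewrite -int_comb_scale_sum.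
Qed.

Lemma aff_lattice_int_comb :
  (forall M : nat -> int, exists z : 'I_n.+1 -> int, forall j, (j < n)%N ->
     M j = N 0%N j + \sum_k z k * (N k j - N 0%N j)) ->
  aff_lattice int_comb = int_span W n.
Proof.
move=> N_span.
pose coord z j := N 0%N j + \sum_(k < n.+1) z k * (N k j - N 0%N j).
have comb z : int_comb ord0 + \sum_k (z k)%:~R *: (int_comb k - int_comb ord0) =
    \sum_(j < n) (coord z j)%:~R *: W j.
  have -> : \sum_k (z k)%:~R *: (int_comb k - int_comb ord0) =
      \sum_k (z k)%:~R *: \sum_(j < n) ((N k j - N 0%N j)%:~R : R) *: W j.
    apply: eq_bigr => k _; rewrite /int_comb -sumrB.
    by congr (_ *: _); apply: eq_bigr => j _; rewrite intrB scalerBl.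
  rewrite (scaler_sum_exchange _ (fun (k : 'I_n.+1) (j : 'I_n) => (N k j - N 0%N j)%:~R)).
  rewrite -big_split /=; apply: eq_bigr => j _.
  rewrite -scalerDl intrD rmorph_sum; congr ((_ + _) *: _).
  by apply: eq_bigr => k _; rewrite rmorphM.
apply/seteqP; split=> y.
  by case=> z ->; rewrite /= comb; exists (coord z).
case=> M ->; have [z z_span] := N_span M.
by exists z; rewrite comb; apply: eq_bigr => j _; rewrite /coord -z_span.
Qed.

End IntegerCombinations.

Section OrderedVertices.

Variables (R : realType) (m n : nat) (i0 : 'I_n.+1) (s : seq 'I_n.+1).
Hypothesis s_perm : perm_eq s (enum (predC1 i0)).

Lemma size_ordered : size s = n.
Proof. by rewrite (perm_size s_perm) -cardE cardC1 card_ord. Qed.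

Lemma nth_ordered_neq j : (j < n)%N -> nth i0 s j != i0.
Proof.
move=> jn; have : nth i0 s j \in enum (predC1 i0).
  by rewrite -(perm_mem s_perm) mem_nth ?size_ordered.
by rewrite mem_enum inE.
Qed.

Lemma big_predC1_ordered (V : zmodType) (F : 'I_n.+1 -> V) :
  \sum_(i | i != i0) F i = \sum_(j < n) F (nth i0 s j).
Proof.
rewrite -[LHS]/(\sum_(i in predC1 i0) F i) -big_enum -(perm_big _ s_perm) /=.
by rewrite (big_nth i0) size_ordered big_mkord.
Qed.

Definition extend_ordered (T : Type) (t : T) (f : nat -> T) (i : 'I_n.+1) : T :=
  if i == i0 then t else f (index i s).

Lemma extend_ordered_nth T (t : T) f j :
  (j < n)%N -> extend_ordered t f (nth i0 s j) = f j.
Proof.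
move=> jn; rewrite /extend_ordered (negbTE (nth_ordered_neq jn)).
by rewrite index_uniq ?size_ordered // (perm_uniq s_perm) enum_uniq.
Qed.

Lemma sum_extend_ordered T (V : zmodType) (F : 'I_n.+1 -> T -> V) t (f : nat -> T) :
  \sum_i F i (extend_ordered t f i) = F i0 t + \sum_(j < n) F (nth i0 s j) (f j).
Proof.
rewrite (bigD1 i0) //= {1}/extend_ordered eqxx big_predC1_ordered.
by congr (_ + _); apply: eq_bigr => j _; rewrite extend_ordered_nth.
Qed.

Variable w : 'I_n.+1 -> 'rV[R]_m.
Hypothesis w_i0 : w i0 = 0.

Lemma sum_ordered (f : 'I_n.+1 -> R) :
  \sum_i f i *: w i = \sum_(j < n) f (nth i0 s j) *: w (nth i0 s j).
Proof. by rewrite (bigD1 i0) //= w_i0 scaler0 add0r big_predC1_ordered. Qed.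

Lemma aff_indep_ordered : aff_indep w ->
  forall cc : nat -> R, \sum_(j < n) cc j *: w (nth i0 s j) = 0 ->
  forall j, (j < n)%N -> cc j = 0.
Proof.
move=> w_indep cc cc_comb j jn.
pose lb := extend_ordered (- \sum_(j < n) cc j) cc.
have lb_sum : \sum_i lb i = 0 by rewrite (sum_extend_ordered (fun _ r => r)) addNr.
have lb_comb : \sum_i lb i *: w i = 0.
  by rewrite (sum_extend_ordered (fun i r => r *: w i)) w_i0 scaler0 add0r.
by rewrite -(extend_ordered_nth (- \sum_(j < n) cc j) cc jn) w_indep.
Qed.

Lemma aff_lattice_ordered : aff_lattice w = int_span (fun j => w (nth i0 s j)) n.
Proof.
rewrite aff_lattice_combE; apply/seteqP; split=> y.
  case=> z _ ->; exists (fun j => z (nth i0 s j)).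
  by rewrite (sum_ordered (fun i => (z i)%:~R)).
case=> M ->; pose z := extend_ordered (1 - \sum_(j < n) M j) M.
exists z.
  by rewrite (sum_extend_ordered (fun _ k => k)) subrK.
rewrite (sum_ordered (fun i => (z i)%:~R)); apply: eq_bigr => j _.
by rewrite /z extend_ordered_nth.
Qed.

End OrderedVertices.

Section KuhnSimplexInDilate.

Variables (R : realType) (m n e : nat).
Variables (w : 'I_n.+1 -> 'rV[R]_m) (w' : 'I_e.+1 -> 'rV[R]_m).
Variables (i0 : 'I_n.+1) (j0 : 'I_e.+1) (LA : 'I_n.+1 -> 'I_e.+1 -> R).
Hypotheses (w_i0 : w i0 = 0) (w'_j0 : w' j0 = 0).
Hypotheses (LA_ge0 : forall i l, 0 <= LA i l) (LA_sum1 : forall i, \sum_l LA i l = 1).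
Hypothesis w_LA : forall i, w i = \sum_l LA i l *: w' l.

(* The value at [w i] of the linear form that is [1] on the facet of [conv w']
   opposite to the origin [w' j0]. *)
Definition height i := \sum_(l | l != j0) LA i l.

Lemma height_ge0 i : 0 <= height i.
Proof. by apply: sumr_ge0 => l _. Qed.

Lemma height_le1 i : height i <= 1.
Proof. by rewrite -(LA_sum1 i) (bigD1 j0) //= lerDr. Qed.

Lemma dil_conv_height (J : finType) (g : J -> 'I_n.+1) (mu : J -> R) c :
  0 < c -> (forall j, 0 <= mu j) -> \sum_j mu j * height (g j) <= c ->
  dil c (conv w') (\sum_j mu j *: w (g j)).
Proof.
move=> c_gt0 mu_ge0 mu_height; under eq_bigr do rewrite w_LA.
rewrite (scaler_sum_exchange mu (fun j l => LA (g j) l)).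
apply: (dil_conv_comb w'_j0 c_gt0) => [l|].
  by apply: sumr_ge0 => j _; apply: mulr_ge0.
rewrite exchange_big /=; apply: le_trans mu_height; rewrite le_eqVlt; apply/orP; left.
by apply/eqP/eq_bigr => j _; rewrite mulr_sumr.
Qed.

Lemma height_comb_le (mu : 'I_n.+1 -> R) t y :
  aff_indep w' -> 0 <= t -> conv w' y -> \sum_i mu i *: w i = t *: y ->
  \sum_i mu i * height i <= t.
Proof.
move=> w'_indep t_ge0 [lam [lam_ge0 [lam_sum1 ->]]] mu_comb.
have coord_eq : \sum_l (\sum_i mu i * LA i l) *: w' l = \sum_l (t * lam l) *: w' l.
  rewrite -scaler_sum_exchange; under eq_bigr do rewrite -w_LA.
  by rewrite mu_comb scaler_sumr; apply: eq_bigr => l _; rewrite scalerA.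
have -> : \sum_i mu i * height i = \sum_(l | l != j0) \sum_i mu i * LA i l.
  by rewrite exchange_big; apply: eq_bigr => i _; rewrite mulr_sumr.
rewrite (aff_indep_coord_sum w'_indep w'_j0 coord_eq).
rewrite -mulr_sumr ler_piMr // -lam_sum1 [X in _ <= X](bigD1 j0) //= lerDr.
exact: lam_ge0.
Qed.

Definition height_order : seq 'I_n.+1 :=
  sort (fun i j => height j <= height i) (enum (predC1 i0)).

Definition ordered_vertex j := w (nth i0 height_order j).

Definition ordered_height j := height (nth i0 height_order j).

Lemma height_order_perm : perm_eq height_order (enum (predC1 i0)).
Proof. by rewrite /height_order perm_sort. Qed.

Lemma ordered_height_nonincr j : (j.+1 < n)%N -> ordered_height j.+1 <= ordered_height j.
Proof.
move=> jn; have : sorted (fun i k => height k <= height i) height_order.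
  by apply: sort_sorted => i k; exact: le_total.
by move/(sortedP i0)/(_ j); rewrite (size_ordered height_order_perm); apply.
Qed.

Definition kuhn_simplex (nu : nat -> R) : 'I_n.+1 -> 'rV[R]_m :=
  int_comb ordered_vertex (kuhn_step n nu).

Lemma kuhn_simplex_unimodular nu :
  aff_indep w -> unimodular (aff_lattice w) (kuhn_simplex nu).
Proof.
move=> w_indep; split.
  apply: aff_indep_int_comb; last exact: kuhn_step_indep.
  by move=> cc cc_comb; apply: (aff_indep_ordered height_order_perm w_i0 w_indep cc_comb).
rewrite (aff_lattice_ordered height_order_perm w_i0).
by apply: aff_lattice_int_comb; exact: kuhn_step_lattice.
Qed.

Lemma kuhn_simplex_sub_dil nu c : (forall j, (j < n)%N -> 0 <= nu j) ->
  \sum_(j < n) ordered_height j * nu j + 1 <= c ->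
  conv (kuhn_simplex nu) `<=` dil c (conv w').
Proof.
move=> nu_ge0 nu_height _ [be [be_ge0 [be_sum1 ->]]].
have c_gt0 : 0 < c.
  apply: lt_le_trans nu_height; apply: ltr_pwDr ltr01 (sumr_ge0 _ _) => j _.
  by rewrite mulr_ge0 ?height_ge0 ?nu_ge0.
rewrite int_comb_scale_sum; apply: dil_conv_height => // [j|].
  by apply: sumr_ge0 => k _; rewrite mulr_ge0 ?ler0z ?kuhn_step_ge0.
apply: le_trans nu_height.
have -> : \sum_(j < n) (\sum_k be k * (kuhn_step n nu k j)%:~R) * ordered_height j =
    \sum_k be k * \sum_(j < n) ordered_height j * (kuhn_step n nu k j)%:~R.
  under eq_bigr do rewrite mulr_suml.
  rewrite exchange_big; apply: eq_bigr => k _; rewrite mulr_sumr.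
  by apply: eq_bigr => j _; rewrite mulrAC mulrA.
set B := (X in _ <= X).
have -> : B = \sum_k be k * B by rewrite -mulr_suml be_sum1 mul1r.
apply: ler_sum => k _; apply: ler_wpM2l => //.
apply: (@kuhn_step_weighted_le _ n nu ordered_height) => [j _|].
  by rewrite height_ge0 height_le1.
exact: ordered_height_nonincr.
Qed.

Lemma kuhn_simplex_mem nu :
  conv (kuhn_simplex nu) (\sum_(j < n) nu j *: ordered_vertex j).
Proof.
exists (kuhn_weight n nu); split.
  by move=> k; apply: kuhn_weight_ge0; rewrite -ltnS.
split; first exact: kuhn_weight_sum.
by rewrite int_comb_scale_sum; apply: eq_bigr => j _; rewrite kuhn_weight_step.
Qed.

Lemma comb_in_UC (mu : 'I_n.+1 -> R) c : aff_indep w -> (forall i, 0 <= mu i) ->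
  \sum_i mu i * height i + 1 <= c ->
  UC (aff_lattice w) (dil c (conv w')) (\sum_i mu i *: w i).
Proof.
move=> w_indep mu_ge0 mu_height.
pose nu j := mu (nth i0 height_order j).
exists n, (kuhn_simplex nu); split; first exact: kuhn_simplex_unimodular.
split; last by rewrite (sum_ordered height_order_perm w_i0); exact: kuhn_simplex_mem.
apply: kuhn_simplex_sub_dil => [j _|]; first exact: mu_ge0.
apply: le_trans mu_height; rewrite lerD2r (bigD1 i0) //=.
rewrite (big_predC1_ordered height_order_perm) ler_wpDl ?mulr_ge0 ?height_ge0 //.
by under eq_bigr do rewrite mulrC.
Qed.

End KuhnSimplexInDilate.

Lemma UC_rV0 (R : realType) (w w' : 'I_1 -> 'rV[R]_0) c x :
  UC (aff_lattice w) (dil c (conv w')) x.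
Proof.
have rV0_eq (u v : 'rV[R]_0) : u = v by rewrite (thinmx0 u) (thinmx0 v).
exists 0%N, w; split; [split|split] => //.
- by move=> lam lam_sum _ i; rewrite ord1 -lam_sum big_ord1.
- by move=> q _; exists (w' ord0); [exact: conv_vertex | exact: rV0_eq].
- by rewrite (rV0_eq x (w ord0)); exact: conv_vertex.
Qed.

Theorem lemma2p2 (R : realType) (d : nat) (w w' : 'I_d.+1 -> 'rV[R]_d) :
  aff_indep w -> aff_indep w' ->
  (exists i, w i = 0) -> (exists j, w' j = 0) ->
  conv w `<=` conv w' ->
  cone0 (conv w) = cone0 (conv w') ->
  forall eps c : R, 0 < eps -> eps < 1 -> Num.sqrt (d%:R) / eps <= c ->
  dil (c - eps * c) (conv w') `<=` UC (aff_lattice w) (dil c (conv w')).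
Proof.
move=> w_indep w'_indep [i0 w_i0] [j0 w'_j0] conv_sub cone_eq.
move=> eps c eps_gt0 eps_lt1 c_ge _ [y y_conv <-].
case: (posnP d) => [d0|d_gt0]; first by subst d; exact: UC_rV0.
have eps_c : 1 <= eps * c.
  have sqrt_ge1 : 1 <= Num.sqrt (d%:R : R).
    by rewrite -[X in X <= _]sqrtr1 ler_sqrt ?ler1n.
  by move: c_ge; rewrite ler_pdivrMr // mulrC => /(le_trans sqrt_ge1).
have scale_ge0 : 0 <= c - eps * c by nra.
have [LA LA_spec] := choice (fun i => conv_sub _ (conv_vertex w i)).
have LA_ge0 i l : 0 <= LA i l by case: (LA_spec i) => /(_ l).
have LA_sum1 i : \sum_l LA i l = 1 by case: (LA_spec i) => _ [].
have w_LA i : w i = \sum_l LA i l *: w' l by case: (LA_spec i) => _ [].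
have : cone0 (conv w) ((c - eps * c) *: y).
  by rewrite cone_eq; exists (c - eps * c); exists y.
case/cone0_conv_comb => mu mu_ge0 mu_comb; rewrite mu_comb.
apply: (comb_in_UC w_i0 w'_j0 LA_ge0 LA_sum1 w_LA) => //.
have := height_comb_le w'_j0 w_LA w'_indep _ y_conv (esym mu_comb).
by move/(_ scale_ge0); lra.
Qed.
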